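(* For every modal formula $A$ and label $x$: if ${\sf GL}\vdash A$ then the sequent $\emptyset\Rightarrow x:A$ has an $\infty$-proof in $\mathsf{labK4}$.
   Context: Modal formulas: $A ::= p \mid \bot \mid A\wedge A \mid A \vee A \mid A \to A \mid \Box A \mid \Diamond A$. ${\sf GL}$ is the Hilbert system containing all classical propositional tautologies, the axioms $\Box(A\to B)\to(\Box A\to\Box B)$, $\Box A\to\Box\Box A$ and $\Box(\Box A\to A)\to\Box A$, closed under modus ponens and necessitation (from $A$ infer $\Box A$). ($\Diamond$ is interpreted classically as dual to $\Box$ in ${\sf GL}$.) Labelled sequents $\mathcal R,\Gamma\Rightarrow\Delta$ with $\mathcal R$ a set of relational atoms $xRy$ and $\Gamma,\Delta$ multisets of labelled formulas $x:A$. $\mathsf{labK4}$ rules (premisses / conclusion): id $\mathcal R,x:p\Rightarrow x:p$; $\bot$L $\mathcal R,x:\bot,\Gamma\Rightarrow\Delta$; cut: $\mathcal R,\Gamma\Rightarrow\Delta,x:A$ and $\mathcal R,\Gamma',x:A\Rightarrow\Delta'$ / $\mathcal R,\Gamma,\Gamma'\Rightarrow\Delta,\Delta'$; left/right weakening and contraction; thinning $\mathcal R,\Gamma\Rightarrow\Delta$ / $\mathcal R,\mathcal R',\Gamma\Rightarrow\Delta$; $\to$L: $\mathcal R,\Gamma\Rightarrow\Delta,x:A$ and $\mathcal R,\Gamma',x:B\Rightarrow\Delta'$ / $\mathcal R,\Gamma,\Gamma',x:A\to B\Rightarrow\Delta,\Delta'$; $\to$R: $\mathcal R,\Gamma,x:A\Rightarrow\Delta,x:B$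 / $\mathcal R,\Gamma\Rightarrow\Delta,x:A\to B$; $\wedge$L, $\wedge$R, $\vee$L, $\vee$R as in Gentzen's LK on labelled formulas with the same label; $\Diamond$L ($y$ fresh): $\mathcal R,xRy,\Gamma,y:A\Rightarrow\Delta$ / $\mathcal R,\Gamma,x:\Diamond A\Rightarrow\Delta$; $\Diamond$R: $\mathcal R,xRy,\Gamma\Rightarrow\Delta,y:A$ / $\mathcal R,xRy,\Gamma\Rightarrow\Delta,x:\Diamond A$; $\Box$R ($y$ fresh): $\mathcal R,xRy,\Gamma\Rightarrow\Delta,y:A$ / $\mathcal R,\Gamma\Rightarrow\Delta,x:\Box A$; $\Box$L: $\mathcal R,xRy,\Gamma,y:A\Rightarrow\Delta$ / $\mathcal R,xRy,\Gamma,x:\Box A\Rightarrow\Delta$; tr: $\mathcal R,xRy,yRz,xRz,\Gamma\Rightarrow\Delta$ / $\mathcal R,xRy,yRz,\Gamma\Rightarrow\Delta$. A preproof is a possibly infinite tree of rule instances whose leaves are zero-premiss rules; a trace along an infinite branch $(S_i)$ is a sequence of labels $(x_i)_{i\ge k}$ with, for each $i$, $x_i=x_{i+1}$ or $x_iRx_{i+1}$ in the relational context of $S_i$ (progress point); progressing = infinitely many progress points; an $\infty$-proof is a preproof all of whose infinite branches have a progressing trace. *)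

From Stdlib Require Import List Permutation Arith.
Import ListNotations.

Inductive form : Type :=
| Var : nat -> form
| Bot : form
| And : form -> form -> form
| Or  : form -> form -> form
| Imp : form -> form -> form
| Box : form -> form
| Dia : form -> form.

Definition Neg (A : form) : form := Imp A Bot.

(** Classical propositional evaluation: variables, boxed and diamond
    formulas are propositional atoms, valued by an arbitrary v. *)
Fixpoint peval (v : form -> bool) (A : form) : bool :=
  match A with
  | Var _ => v A
  | Bot => false
  | And B C => peval v B && peval v C
  | Or B C => peval v B || peval v C
  | Imp B C => implb (peval v B) (peval v C)
  | Box _ => v A
  | Dia _ => v A
  end.

Definition tautology (A : form) : Prop := forall v, peval v A = true.

Inductive GL : form -> Prop :=
| GL_taut : forall A, tautology A -> GL A
| GL_K : forall A B, GL (Imp (Box (Imp A B)) (Imp (Box A) (Box B)))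
| GL_4 : forall A, GL (Imp (Box A) (Box (Box A)))
| GL_Lob : forall A, GL (Imp (Box (Imp (Box A) A)) (Box A))
| GL_dual1 : forall A, GL (Imp (Dia A) (Neg (Box (Neg A))))
| GL_dual2 : forall A, GL (Imp (Neg (Box (Neg A))) (Dia A))
| GL_MP : forall A B, GL (Imp A B) -> GL A -> GL B
| GL_Nec : forall A, GL A -> GL (Box A).

Definition label := nat.
Definition lform : Type := (label * form)%type.

Record sequent : Type := Seq {
  rel : list (label * label);
  ant : list lform;
  suc : list lform
}.

(** R is a set (equality by membership), Gamma and Delta multisets
    (equality up to permutation). *)
Definition seq_equiv (s t : sequent) : Prop :=
  (forall a, In a (rel s) <-> In a (rel t)) /\
  Permutation (ant s) (ant t) /\ Permutation (suc s) (suc t).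

Definition labels_of (s : sequent) : list label :=
  flat_map (fun p => [fst p; snd p]) (rel s) ++ map fst (ant s) ++ map fst (suc s).

Definition fresh (y : label) (s : sequent) : Prop := ~ In y (labels_of s).

Inductive lk_rule : list sequent -> sequent -> Prop :=
| r_id : forall R x p,
    lk_rule [] (Seq R [(x, Var p)] [(x, Var p)])
| r_botL : forall R x G D,
    lk_rule [] (Seq R ((x, Bot) :: G) D)
| r_cut : forall R G G' D D' x A,
    lk_rule [Seq R G ((x, A) :: D); Seq R ((x, A) :: G') D']
            (Seq R (G ++ G') (D ++ D'))
| r_WL : forall R G D a, lk_rule [Seq R G D] (Seq R (a :: G) D)
| r_WR : forall R G D a, lk_rule [Seq R G D] (Seq R G (a :: D))
| r_CL : forall R G D a, lk_rule [Seq R (a :: a :: G) D] (Seq R (a :: G) D)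
| r_CR : forall R G D a, lk_rule [Seq R G (a :: a :: D)] (Seq R G (a :: D))
| r_thin : forall R R' G D, lk_rule [Seq R G D] (Seq (R ++ R') G D)
| r_impL : forall R G G' D D' x A B,
    lk_rule [Seq R G ((x, A) :: D); Seq R ((x, B) :: G') D']
            (Seq R ((x, Imp A B) :: G ++ G') (D ++ D'))
| r_impR : forall R G D x A B,
    lk_rule [Seq R ((x, A) :: G) ((x, B) :: D)] (Seq R G ((x, Imp A B) :: D))
| r_andL1 : forall R G D x A B,
    lk_rule [Seq R ((x, A) :: G) D] (Seq R ((x, And A B) :: G) D)
| r_andL2 : forall R G D x A B,
    lk_rule [Seq R ((x, B) :: G) D] (Seq R ((x, And A B) :: G) D)
| r_andR : forall R G D x A B,
    lk_rule [Seq R G ((x, A) :: D); Seq R G ((x, B) :: D)]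
            (Seq R G ((x, And A B) :: D))
| r_orL : forall R G D x A B,
    lk_rule [Seq R ((x, A) :: G) D; Seq R ((x, B) :: G) D]
            (Seq R ((x, Or A B) :: G) D)
| r_orR1 : forall R G D x A B,
    lk_rule [Seq R G ((x, A) :: D)] (Seq R G ((x, Or A B) :: D))
| r_orR2 : forall R G D x A B,
    lk_rule [Seq R G ((x, B) :: D)] (Seq R G ((x, Or A B) :: D))
| r_diaL : forall R G D x y A,
    fresh y (Seq R ((x, Dia A) :: G) D) ->
    lk_rule [Seq ((x, y) :: R) ((y, A) :: G) D] (Seq R ((x, Dia A) :: G) D)
| r_diaR : forall R G D x y A,
    In (x, y) R ->
    lk_rule [Seq R G ((y, A) :: D)] (Seq R G ((x, Dia A) :: D))
| r_boxR : forall R G D x y A,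
    fresh y (Seq R G ((x, Box A) :: D)) ->
    lk_rule [Seq ((x, y) :: R) G ((y, A) :: D)] (Seq R G ((x, Box A) :: D))
| r_boxL : forall R G D x y A,
    In (x, y) R ->
    lk_rule [Seq R ((y, A) :: G) D] (Seq R ((x, Box A) :: G) D)
| r_tr : forall R G D x y z,
    In (x, y) R -> In (y, z) R ->
    lk_rule [Seq ((x, z) :: R) G D] (Seq R G D).

Definition rule_inst (ps : list sequent) (c : sequent) : Prop :=
  exists ps0 c0, lk_rule ps0 c0 /\ seq_equiv c c0 /\ Forall2 seq_equiv ps ps0.

CoInductive ptree : Type :=
| Node : sequent -> list ptree -> ptree.

Definition root (t : ptree) : sequent := match t with Node s _ => s end.
Definition children (t : ptree) : list ptree := match t with Node _ ts => ts end.

CoInductive preproof : ptree -> Prop :=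
| pp_node : forall s ts,
    rule_inst (map root ts) s ->
    (forall t, In t ts -> preproof t) ->
    preproof (Node s ts).

Definition inf_branch (t : ptree) (b : nat -> ptree) : Prop :=
  b 0 = t /\ forall n, In (b (S n)) (children (b n)).

Definition progressing_trace (b : nat -> ptree) : Prop :=
  exists (k : nat) (xs : nat -> label),
    (forall i, k <= i ->
       xs i = xs (S i) \/ In (xs i, xs (S i)) (rel (root (b i)))) /\
    (forall n, exists i, n <= i /\ k <= i /\
       In (xs i, xs (S i)) (rel (root (b i)))).

Definition inf_proof (t : ptree) : Prop :=
  preproof t /\ forall b, inf_branch t b -> progressing_trace b.

From Stdlib Require Import List Permutation Arith Lia Classical ClassicalEpsilon.
Import ListNotations.

(** Löb's axiom has a genuinely infinite proof: an explicit cofixpoint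
      [loeb_tree] which keeps refuting [A] at ever new worlds
      [x R y R z R ...]; along the only infinite branch the worlds
      form a progressing trace, while the other branches end in identity
      proofs.
    - Modus ponens is cut, and necessitation is box-right followed by
      thinning. *)

Lemma seq_equiv_refl s : seq_equiv s s.
Proof. split; [tauto | split; apply Permutation_refl]. Qed.

Lemma seq_equiv_sym s t : seq_equiv s t -> seq_equiv t s.
Proof.
  intros [HR [HG HD]].
  split; [intro a; specialize (HR a); tauto | split; apply Permutation_sym; assumption].
Qed.

Lemma seq_equiv_trans s t u : seq_equiv s t -> seq_equiv t u -> seq_equiv s u.
Proof.
  intros [HR [HG HD]] [KR [KG KD]].
  split; [intro a; specialize (HR a); specialize (KR a); tauto
         | split; eapply Permutation_trans; eassumption].
Qed.

Lemma lk_rule_inst ps c : lk_rule ps c -> rule_inst ps c.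
Proof.
  intros H. exists ps, c. split; [exact H | split; [apply seq_equiv_refl |]].
  clear H. induction ps; constructor; auto using seq_equiv_refl.
Qed.

Lemma progressing_trace_shift b m :
  progressing_trace (fun n => b (n + m)) -> progressing_trace b.
Proof.
  intros [k [xs [Hstep Hprog]]]. exists (k + m), (fun i => xs (i - m)). split.
  - intros i Hi. specialize (Hstep (i - m) ltac:(lia)).
    replace (S i - m) with (S (i - m)) by lia.
    replace (i - m + m) with i in Hstep by lia. exact Hstep.
  - intros n. destruct (Hprog n) as [i [Hni [Hki Hrel]]].
    exists (i + m). repeat split; try lia.
    replace (i + m - m) with i by lia. replace (S (i + m) - m) with (S i) by lia.
    exact Hrel.
Qed.

Lemma inf_branch_shift t b m : inf_branch t b -> inf_branch (b m) (fun n => b (n + m)).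
Proof. intros [_ Hb]. split; [reflexivity | intro n; apply Hb]. Qed.

(* A trace may be read off one step late: it suffices that labels attached
   to the nodes of a branch move along the relation of the next node. *)
Lemma progressing_trace_lagged b (lab : nat -> label) :
  (forall i, lab i = lab (S i) \/ In (lab i, lab (S i)) (rel (root (b (S i))))) ->
  (forall n, exists i, n <= i /\ In (lab i, lab (S i)) (rel (root (b (S i))))) ->
  progressing_trace b.
Proof.
  intros Hstep Hprog. exists 1, (fun i => lab (pred i)). split.
  - intros [|i] Hi; [lia | apply Hstep].
  - intros n. destruct (Hprog n) as [i [Hni Hrel]].
    exists (S i). repeat split; [lia | lia | exact Hrel].
Qed.

(* A rule instance whose premisses have ∞-proofs has an ∞-proof: an infinite
   branch through the new root continues in one of the given proofs. *)
Lemma inf_proof_node s ts :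
  rule_inst (map root ts) s -> Forall inf_proof ts -> inf_proof (Node s ts).
Proof.
  intros Hrule Hts. rewrite Forall_forall in Hts. split.
  - constructor; [exact Hrule | intros t Ht; apply Hts, Ht].
  - intros b [H0 Hb]. apply (progressing_trace_shift b 1).
    assert (Hin : In (b 1) ts) by (specialize (Hb 0); rewrite H0 in Hb; exact Hb).
    apply (proj2 (Hts _ Hin)). split; [reflexivity | intro n; apply Hb].
Qed.

Lemma inf_proof_child s ts t : inf_proof (Node s ts) -> In t ts -> inf_proof t.
Proof.
  intros [Hpre Hbr] Hin. split.
  - inversion Hpre; subst. auto.
  - intros b [H0 Hb].
    set (b' := fun n => match n with 0 => Node s ts | S n => b n end).
    assert (Hb' : inf_branch (Node s ts) b').
    { split; [reflexivity |]. intros [|n]; simpl; [rewrite H0; exact Hin | apply Hb]. }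
    destruct (Hbr _ Hb') as [k [xs [Hstep Hprog]]].
    exists k, (fun i => xs (S i)). split.
    + intros i Hi. apply (Hstep (S i)). lia.
    + intros n. destruct (Hprog (S (n + k))) as [[|i] [Hni [Hki Hrel]]]; [lia |].
      exists i. repeat split; [lia | lia | exact Hrel].
Qed.

Lemma preproof_coind (P : ptree -> Prop) :
  (forall t, P t -> rule_inst (map root (children t)) (root t) /\
                    forall t', In t' (children t) -> P t' \/ preproof t') ->
  forall t, P t -> preproof t.
Proof.
  intros Hstep. cofix CH. intros [s ts] Ht. destruct (Hstep _ Ht) as [Hrule Hch].
  constructor; [exact Hrule |].
  intros t' Ht'. destruct (Hch t' Ht') as [HP | Hpre]; [apply CH, HP | exact Hpre].
Qed.

Definition derivable (s : sequent) : Prop := exists t, root t = s /\ inf_proof t.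

Lemma derivable_rule_inst ps c : rule_inst ps c -> Forall derivable ps -> derivable c.
Proof.
  intros Hrule Hps.
  assert (Hts : exists ts, map root ts = ps /\ Forall inf_proof ts).
  { clear Hrule. induction Hps as [|s ps [t [Ht Hinf]] _ [ts [Hroots Hall]]].
    - exists []. auto.
    - exists (t :: ts). simpl. split; [congruence | constructor; assumption]. }
  destruct Hts as [ts [Hroots Hall]].
  exists (Node c ts). split; [reflexivity |].
  apply inf_proof_node; [rewrite Hroots |]; assumption.
Qed.

Lemma derivable_equiv s s' : seq_equiv s s' -> derivable s -> derivable s'.
Proof.
  intros Heq [[s0 ts] [Hroot Hinf]]. simpl in Hroot. subst s0.
  exists (Node s' ts). split; [reflexivity |]. apply inf_proof_node.
  - destruct Hinf as [Hpre _]. inversion Hpre as [? ? [ps0 [c0 [Hr [Hc Hps]]]]]; subst.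
    exists ps0, c0. split; [exact Hr | split; [| exact Hps]].
    eapply seq_equiv_trans; [apply seq_equiv_sym, Heq | exact Hc].
  - apply Forall_forall. intros t Ht. eapply inf_proof_child; eassumption.
Qed.

Lemma derivable_perm R G G' D D' :
  Permutation G G' -> Permutation D D' -> derivable (Seq R G D) -> derivable (Seq R G' D').
Proof. intros HG HD. apply derivable_equiv. split; [tauto | split; assumption]. Qed.

Lemma by_rule0 c : lk_rule [] c -> derivable c.
Proof. intros H. apply (derivable_rule_inst []); [apply lk_rule_inst, H | constructor]. Qed.

Lemma by_rule1 p c : lk_rule [p] c -> derivable p -> derivable c.
Proof. intros H Hp. apply (derivable_rule_inst [p]); [apply lk_rule_inst, H | auto]. Qed.

Lemma by_rule2 p q c : lk_rule [p; q] c -> derivable p -> derivable q -> derivable c.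
Proof. intros H Hp Hq. apply (derivable_rule_inst [p; q]); [apply lk_rule_inst, H | auto]. Qed.

Definition fresh_label (s : sequent) : label := S (list_max (labels_of s)).

Lemma fresh_label_fresh s : fresh (fresh_label s) s.
Proof.
  intro Hin. pose proof (proj1 (list_max_le (labels_of s) _) (le_n _)) as Hmax.
  rewrite Forall_forall in Hmax. specialize (Hmax _ Hin). unfold fresh_label in Hmax. lia.
Qed.

Lemma weaken_left R G D L : derivable (Seq R G D) -> derivable (Seq R (L ++ G) D).
Proof. intros H. induction L; [exact H | eapply by_rule1; [apply r_WL | exact IHL]]. Qed.

Lemma weaken_right R G D L : derivable (Seq R G D) -> derivable (Seq R G (L ++ D)).
Proof. intros H. induction L; [exact H | eapply by_rule1; [apply r_WR | exact IHL]]. Qed.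

Lemma contract1_left R a G D : In a G -> derivable (Seq R (a :: G) D) -> derivable (Seq R G D).
Proof.
  intros Hin H. destruct (in_split _ _ Hin) as [l1 [l2 ->]].
  apply (derivable_perm R (a :: l1 ++ l2) _ D D); [apply Permutation_middle | apply Permutation_refl |].
  eapply by_rule1; [apply r_CL |].
  eapply derivable_perm; [| apply Permutation_refl | exact H].
  constructor. apply Permutation_sym, Permutation_middle.
Qed.

Lemma contract1_right R a G D : In a D -> derivable (Seq R G (a :: D)) -> derivable (Seq R G D).
Proof.
  intros Hin H. destruct (in_split _ _ Hin) as [l1 [l2 ->]].
  apply (derivable_perm R G G (a :: l1 ++ l2)); [apply Permutation_refl | apply Permutation_middle |].
  eapply by_rule1; [apply r_CR |].
  eapply derivable_perm; [apply Permutation_refl | | exact H].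
  constructor. apply Permutation_sym, Permutation_middle.
Qed.

Lemma contract_left R G D L : incl L G -> derivable (Seq R (L ++ G) D) -> derivable (Seq R G D).
Proof.
  induction L as [|a L IH]; intros Hincl H; [exact H |].
  apply IH; [intros b Hb; apply Hincl; right; exact Hb |].
  apply (contract1_left R a); [apply in_or_app; right; apply Hincl; left; reflexivity | exact H].
Qed.

Lemma contract_right R G D L : incl L D -> derivable (Seq R G (L ++ D)) -> derivable (Seq R G D).
Proof.
  induction L as [|a L IH]; intros Hincl H; [exact H |].
  apply IH; [intros b Hb; apply Hincl; right; exact Hb |].
  apply (contract1_right R a); [apply in_or_app; right; apply Hincl; left; reflexivity | exact H].
Qed.

Lemma impL_shared R G D x A B :
  derivable (Seq R G ((x, A) :: D)) -> derivable (Seq R ((x, B) :: G) D) ->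
  derivable (Seq R ((x, Imp A B) :: G) D).
Proof.
  intros HA HB.
  assert (H : derivable (Seq R ((x, Imp A B) :: G ++ G) (D ++ D)))
    by (eapply by_rule2; [apply r_impL | exact HA | exact HB]).
  apply (contract_right _ _ _ D (incl_refl D)) in H.
  apply (contract_left R _ D G); [intros a Ha; right; exact Ha |].
  eapply derivable_perm; [apply Permutation_middle | apply Permutation_refl | exact H].
Qed.

Lemma andL_both R G D x A B :
  derivable (Seq R ((x, A) :: (x, B) :: G) D) -> derivable (Seq R ((x, And A B) :: G) D).
Proof.
  intros H. eapply by_rule1; [apply r_CL |].
  eapply by_rule1; [apply r_andL1 |].
  eapply derivable_perm; [apply perm_swap | apply Permutation_refl |].
  eapply by_rule1; [apply r_andL2 |].
  eapply derivable_perm; [apply perm_swap | apply Permutation_refl | exact H].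
Qed.

Lemma orR_both R G D x A B :
  derivable (Seq R G ((x, A) :: (x, B) :: D)) -> derivable (Seq R G ((x, Or A B) :: D)).
Proof.
  intros H. eapply by_rule1; [apply r_CR |].
  eapply by_rule1; [apply r_orR1 |].
  eapply derivable_perm; [apply Permutation_refl | apply perm_swap |].
  eapply by_rule1; [apply r_orR2 |].
  eapply derivable_perm; [apply Permutation_refl | apply perm_swap | exact H].
Qed.

Lemma identity A : forall R x, derivable (Seq R [(x, A)] [(x, A)]).
Proof.
  induction A as [p| |A1 IH1 A2 IH2|A1 IH1 A2 IH2|A1 IH1 A2 IH2|A IH|A IH]; intros R x.
  - apply by_rule0, r_id.
  - apply by_rule0, r_botL.
  - eapply by_rule2; [apply r_andR | |].
    + eapply by_rule1; [apply r_andL1 | apply IH1].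
    + eapply by_rule1; [apply r_andL2 | apply IH2].
  - eapply by_rule2; [apply r_orL | |].
    + eapply by_rule1; [apply r_orR1 | apply IH1].
    + eapply by_rule1; [apply r_orR2 | apply IH2].
  - eapply by_rule1; [apply r_impR |].
    eapply derivable_perm; [apply perm_swap | apply Permutation_refl |].
    eapply by_rule2; [apply (r_impL R [(x, A1)] [] [] [(x, A2)]) | apply IH1 | apply IH2].
  - set (y := fresh_label (Seq R [(x, Box A)] [(x, Box A)])).
    eapply by_rule1; [apply (r_boxR R [(x, Box A)] [] x y A), fresh_label_fresh |].
    eapply by_rule1; [apply r_boxL; left; reflexivity | apply IH].
  - set (y := fresh_label (Seq R [(x, Dia A)] [(x, Dia A)])).
    eapply by_rule1; [apply (r_diaL R [] [(x, Dia A)] x y A), fresh_label_fresh |].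
    eapply by_rule1; [apply r_diaR; left; reflexivity | apply IH].
Qed.

Lemma shared_formula R G D a : In a G -> In a D -> derivable (Seq R G D).
Proof.
  intros HG HD. destruct (in_split _ _ HG) as [g1 [g2 ->]].
  destruct (in_split _ _ HD) as [d1 [d2 ->]]. destruct a as [y A].
  pose proof (weaken_right _ _ _ (d1 ++ d2) (weaken_left _ _ _ (g1 ++ g2) (identity A R y))) as H.
  eapply derivable_perm; [| | exact H].
  - eapply Permutation_trans; [apply Permutation_app_comm | apply (Permutation_middle g1 g2)].
  - eapply Permutation_trans; [apply Permutation_app_comm | apply (Permutation_middle d1 d2)].
Qed.

Fixpoint weight (A : form) : nat :=
  match A with
  | Var _ | Box _ | Dia _ => 0
  | Bot => 1
  | And B C | Or B C | Imp B C => 1 + weight B + weight C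
  end.

Definition list_weight (l : list form) : nat := fold_right (fun A n => weight A + n) 0 l.

Lemma list_weight_perm l l' : Permutation l l' -> list_weight l = list_weight l'.
Proof. induction 1; simpl; lia. Qed.

Definition valid (G D : list form) : Prop :=
  forall v, forallb (peval v) G = true -> existsb (peval v) D = true.

Lemma valid_perm G G' D D' : Permutation G G' -> Permutation D D' -> valid G D -> valid G' D'.
Proof.
  intros HG HD Hv v HvG'.
  assert (HvG : forallb (peval v) G = true).
  { apply forallb_forall. intros A HA.
    exact (proj1 (forallb_forall _ _) HvG' A (Permutation_in _ HG HA)). }
  destruct (proj1 (existsb_exists _ _) (Hv v HvG)) as [B [HB HvB]].
  apply existsb_exists. exists B. split; [apply (Permutation_in _ HD HB) | exact HvB].
Qed.

(* Decides an entailment between validity statements by a truth table over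
   the formulas occurring in it. *)
Ltac truth_table :=
  unfold valid in *; let v := fresh "v" in intros v;
  repeat match goal with H : forall _ : form -> bool, _ |- _ => specialize (H v); revert H end;
  simpl;
  repeat match goal with
         | |- context [peval ?v ?A] => destruct (peval v A)
         | |- context [forallb ?f ?l] => destruct (forallb f l)
         | |- context [existsb ?f ?l] => destruct (existsb f l)
         end;
  simpl; intuition discriminate.

Definition lderivable R x (G D : list form) : Prop :=
  derivable (Seq R (map (pair x) G) (map (pair x) D)).

Lemma lderivable_perm R x G G' D D' :
  Permutation G G' -> Permutation D D' -> lderivable R x G D -> lderivable R x G' D'.
Proof. intros HG HD. apply derivable_perm; apply Permutation_map; assumption. Qed.

Lemma compound_or_atomic (G : list form) :
  (exists C G', 0 < weight C /\ Permutation G (C :: G')) \/ (forall C, In C G -> weight C = 0).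
Proof.
  induction G as [|A G [[C [G' [HC HP]]] | Hat]].
  - right. intros _ [].
  - left. exists C, (A :: G'). split; [exact HC |].
    eapply Permutation_trans; [apply perm_skip, HP | apply perm_swap].
  - destruct (weight A) eqn:HA.
    + right. intros C [<- | HC]; auto.
    + left. exists A, G. split; [lia | reflexivity].
Qed.

Lemma form_eq_dec (A B : form) : {A = B} + {A <> B}.
Proof. decide equality; apply Nat.eq_dec. Qed.

Section PropositionalCompleteness.
Variables (R : list (label * label)) (x : label).

Definition complete_below (n : nat) : Prop :=
  forall G D, list_weight G + list_weight D < n -> valid G D -> lderivable R x G D.

(* A valid sequent with a compound formula on the left reduces to lighter valid sequents. *)
Lemma decompose_left C G D :
  0 < weight C -> complete_below (list_weight (C :: G) + list_weight D) ->
  valid (C :: G) D -> lderivable R x (C :: G) D.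
Proof.
  intros HC IH Hv. unfold lderivable.
  destruct C as [p| |C1 C2|C1 C2|C1 C2|C1|C1]; simpl in HC, IH; try lia.
  - apply by_rule0, r_botL.
  - apply andL_both, (IH (C1 :: C2 :: G) D); [simpl; lia | truth_table].
  - eapply by_rule2; [apply r_orL | |].
    + apply (IH (C1 :: G) D); [simpl; lia | truth_table].
    + apply (IH (C2 :: G) D); [simpl; lia | truth_table].
  - apply impL_shared.
    + apply (IH G (C1 :: D)); [simpl; lia | truth_table].
    + apply (IH (C2 :: G) D); [simpl; lia | truth_table].
Qed.

Lemma decompose_right C G D :
  0 < weight C -> complete_below (list_weight G + list_weight (C :: D)) ->
  valid G (C :: D) -> lderivable R x G (C :: D).
Proof.
  intros HC IH Hv. unfold lderivable.
  destruct C as [p| |C1 C2|C1 C2|C1 C2|C1|C1]; simpl in HC, IH; try lia.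
  - eapply by_rule1; [apply r_WR |].
    apply (IH G D); [lia | truth_table].
  - eapply by_rule2; [apply r_andR | |].
    + apply (IH G (C1 :: D)); [simpl; lia | truth_table].
    + apply (IH G (C2 :: D)); [simpl; lia | truth_table].
  - apply orR_both, (IH G (C1 :: C2 :: D)); [simpl; lia | truth_table].
  - eapply by_rule1; [apply r_impR |].
    apply (IH (C1 :: G) (C2 :: D)); [simpl; lia | truth_table].
Qed.

(* A valid sequent of atoms shares a formula between its two sides: make
   exactly the atoms on the left true. *)
Lemma atomic_valid G D :
  (forall C, In C G -> weight C = 0) -> (forall C, In C D -> weight C = 0) ->
  valid G D -> lderivable R x G D.
Proof.
  intros HG HD Hv.
  set (v := fun A => if in_dec form_eq_dec A G then true else false).
  assert (Hatom : forall C, weight C = 0 -> peval v C = v C)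
    by (intros [] HC; simpl in HC; try lia; reflexivity).
  assert (HvG : forallb (peval v) G = true).
  { apply forallb_forall. intros A HA. rewrite (Hatom A (HG A HA)). unfold v.
    destruct (in_dec form_eq_dec A G); [reflexivity | contradiction]. }
  destruct (proj1 (existsb_exists _ _) (Hv v HvG)) as [B [HBD HvB]].
  rewrite (Hatom B (HD B HBD)) in HvB. unfold v in HvB.
  destruct (in_dec form_eq_dec B G) as [HBG | _]; [| discriminate].
  apply (shared_formula _ _ _ (x, B)); apply in_map; assumption.
Qed.

Theorem propositional_completeness G D : valid G D -> lderivable R x G D.
Proof.
  revert G D.
  enough (Hall : forall n, complete_below n) by (intros G D; apply (Hall (S (list_weight G + list_weight D))), Nat.lt_succ_diag_r).
  induction n as [|n IH]; intros G D Hn Hv; [lia |].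
  destruct (compound_or_atomic G) as [[C [G' [HC HP]]] | HG].
  { apply (lderivable_perm R x (C :: G') G D D); [apply Permutation_sym, HP | reflexivity |].
    apply decompose_left; [exact HC | | eapply valid_perm; [exact HP | reflexivity | exact Hv]].
    intros G0 D0 H0. apply IH. rewrite (list_weight_perm _ _ HP) in Hn. lia. }
  destruct (compound_or_atomic D) as [[C [D' [HC HP]]] | HD].
  { apply (lderivable_perm R x G G (C :: D') D); [reflexivity | apply Permutation_sym, HP |].
    apply decompose_right; [exact HC | | eapply valid_perm; [reflexivity | exact HP | exact Hv]].
    intros G0 D0 H0. apply IH. rewrite (list_weight_perm _ _ HP) in Hn. lia. }
  apply atomic_valid; assumption.
Qed.

End PropositionalCompleteness.

Definition loeb_hyp (A : form) : form := Box (Imp (Box A) A).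

Definition identity_tree (R : list (label * label)) (y : label) (A : form) : ptree :=
  proj1_sig (constructive_indefinite_description _ (identity A R y)).

Lemma identity_tree_spec R y A :
  root (identity_tree R y A) = Seq R [(y, A)] [(y, A)] /\ inf_proof (identity_tree R y A).
Proof. unfold identity_tree. destruct (constructive_indefinite_description _ _) as [t Ht]. exact Ht. Qed.

Definition succ_label (s : sequent) : label :=
  match suc s with (u, _) :: _ => u | [] => 0 end.

Definition first_child (t : ptree) : ptree :=
  match children t with t' :: _ => t' | [] => t end.

Section Loeb.
Variables (x : label) (A : form).

Definition next_world (R : list (label * label)) (y : label) : label :=
  fresh_label (Seq R [(x, loeb_hyp A)] [(y, Box A)]).

(* The ∞-proof of [R, x:□(□A→A) => y:A], in five stages: contract the
   hypothesis (stage 0), instantiate it at [y] (1), split [□A → A] (2),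
   refute [y:□A] at a fresh world [z] (3), and add [x R z] by transitivity (4),
   which returns to stage 0 at world [z]. *)
CoFixpoint loeb_tree (R : list (label * label)) (y : label) : ptree :=
  Node (Seq R [(x, loeb_hyp A)] [(y, A)])
   [Node (Seq R [(x, loeb_hyp A); (x, loeb_hyp A)] [(y, A)])
     [Node (Seq R [(y, Imp (Box A) A); (x, loeb_hyp A)] [(y, A)])
       [Node (Seq R [(x, loeb_hyp A)] [(y, Box A)])
         [Node (Seq ((y, next_world R y) :: R) [(x, loeb_hyp A)] [(next_world R y, A)])
           [loeb_tree ((x, next_world R y) :: (y, next_world R y) :: R) (next_world R y)]];
        identity_tree R y A]]].

(* The node of the loop at stage [p] (for [p <= 4]) and world [y]. *)
Fixpoint loeb_stage (p : nat) (R : list (label * label)) (y : label) : ptree :=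
  match p with 0 => loeb_tree R y | S p => first_child (loeb_stage p R y) end.

Definition on_loop (t : ptree) : Prop :=
  exists p R y, p <= 4 /\ In (x, y) R /\ t = loeb_stage p R y.

Definition loop_next (p : nat) (R : list (label * label)) (y : label) (t : ptree) : Prop :=
  (p < 4 /\ t = loeb_stage (S p) R y) \/
  (p = 4 /\ t = loeb_stage 0 ((x, next_world R y) :: (y, next_world R y) :: R) (next_world R y)).

Lemma loop_children p R y t :
  p <= 4 -> In t (children (loeb_stage p R y)) -> loop_next p R y t \/ t = identity_tree R y A.
Proof.
  intros Hp Ht. unfold loop_next.
  destruct p as [|[|[|[|[|p]]]]]; simpl in Ht; try lia;
    repeat destruct Ht as [<- | Ht]; try contradiction; auto with arith.
Qed.

Lemma loop_next_on_loop p R y t : In (x, y) R -> loop_next p R y t -> on_loop t.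
Proof.
  intros Hxy [[Hp ->] | [_ ->]].
  - exists (S p), R, y. auto with arith.
  - exists 0, ((x, next_world R y) :: (y, next_world R y) :: R), (next_world R y).
    repeat split; [lia | left; reflexivity].
Qed.

Lemma loop_next_trace p R y t :
  loop_next p R y t ->
  let l := succ_label (root (loeb_stage p R y)) in
  (p <> 3 /\ l = succ_label (root t)) \/
  (p = 3 /\ In (l, succ_label (root t)) (rel (root t))).
Proof.
  intros [[Hp ->] | [-> ->]]; [destruct p as [|[|[|[|p]]]]; try lia |];
    [left .. | right | left]; split; auto; simpl; auto.
Qed.

Lemma loop_preproof : forall t, on_loop t -> preproof t.
Proof.
  apply preproof_coind. intros t [p [R [y [Hp [Hxy ->]]]]]. split.
  - destruct p as [|[|[|[|[|p]]]]]; try lia; simpl; apply lk_rule_inst.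
    + apply (r_CL R [] [(y, A)] (x, loeb_hyp A)).
    + apply (r_boxL R [(x, loeb_hyp A)] [(y, A)] x y (Imp (Box A) A) Hxy).
    + rewrite (proj1 (identity_tree_spec R y A)).
      apply (r_impL R [(x, loeb_hyp A)] [] [] [(y, A)] y (Box A) A).
    + apply (r_boxR R [(x, loeb_hyp A)] [] y (next_world R y) A), fresh_label_fresh.
    + apply r_tr with (y := y); [right; exact Hxy | left; reflexivity].
  - intros t' Ht'. destruct (loop_children p R y t' Hp Ht') as [Hn | ->].
    + left. eapply loop_next_on_loop; eassumption.
    + right. apply identity_tree_spec.
Qed.

Definition follows_loop (b : nat -> ptree) : Prop :=
  forall i p R y, p <= 4 -> b i = loeb_stage p R y -> loop_next p R y (b (S i)).

Lemma loop_reaches_stage3 b : follows_loop b ->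
  forall n p R y, p <= 4 -> b n = loeb_stage p R y ->
  exists j R' y', n <= j /\ b j = loeb_stage 3 R' y'.
Proof.
  intros Hnext.
  assert (Hwalk : forall d n p R y, p + d = 3 -> b n = loeb_stage p R y ->
                  b (n + d) = loeb_stage 3 R y).
  { induction d as [|d IH]; intros n p R y Hd Hn.
    - replace p with 3 in Hn by lia. rewrite Nat.add_0_r. exact Hn.
    - destruct (Hnext n p R y ltac:(lia) Hn) as [[_ Hs] | [H4 _]]; [| lia].
      replace (n + S d) with (S n + d) by lia. apply (IH (S n) (S p)); [lia | exact Hs]. }
  intros n p R y Hp Hn. destruct (Nat.eq_dec p 4) as [-> | Hp4].
  - destruct (Hnext n 4 R y Hp Hn) as [[H4 _] | [_ Hs]]; [lia |].
    eexists (S n + 3), _, _. split; [lia | apply (Hwalk 3 (S n) 0); [lia | exact Hs]].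
  - exists (n + (3 - p)), R, y. split; [lia | apply (Hwalk _ n p); [lia | exact Hn]].
Qed.

(* Every infinite branch of the loop has a progressing trace: either it
   enters an identity proof, or it follows the loop and the succedent labels
   [y, z, ...] form the trace, progressing at each stage-4 node. *)
Lemma loop_branch_progress R y b :
  In (x, y) R -> inf_branch (loeb_tree R y) b -> progressing_trace b.
Proof.
  intros Hxy [Hb0 Hb].
  destruct (classic (exists j R' y', b j = identity_tree R' y' A)) as [[j [R' [y' Hj]]] | Hnoid].
  { apply (progressing_trace_shift b j), (proj2 (identity_tree_spec R' y' A)).
    rewrite <- Hj. exact (inf_branch_shift _ _ j (conj Hb0 Hb)). }
  assert (Hnext : follows_loop b).
  { intros i p R1 y1 Hp Hi. specialize (Hb i). rewrite Hi in Hb.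
    destruct (loop_children p R1 y1 _ Hp Hb) as [Hn | Hid]; [exact Hn | exfalso; eauto]. }
  assert (Hloop : forall i, on_loop (b i)).
  { induction i as [|i [p [R1 [y1 [Hp [Hxy1 Hi]]]]]].
    - exists 0, R, y. rewrite Hb0. auto with arith.
    - apply (loop_next_on_loop p R1 y1); [exact Hxy1 | apply Hnext; assumption]. }
  apply (progressing_trace_lagged b (fun i => succ_label (root (b i)))).
  - intros i. destruct (Hloop i) as [p [R1 [y1 [Hp [_ Hi]]]]].
    destruct (loop_next_trace p R1 y1 _ (Hnext i p R1 y1 Hp Hi)) as [[_ Heq] | [_ Hrel]];
      rewrite Hi; [left | right]; assumption.
  - intros n. destruct (Hloop n) as [p [R1 [y1 [Hp [_ Hn]]]]].
    destruct (loop_reaches_stage3 b Hnext n p R1 y1 Hp Hn) as [j [R2 [y2 [Hnj Hj]]]].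
    exists j. split; [exact Hnj |].
    destruct (loop_next_trace 3 R2 y2 _ (Hnext j 3 R2 y2 ltac:(lia) Hj)) as [[H3 _] | [_ Hrel]];
      [lia | rewrite Hj; exact Hrel].
Qed.

Lemma loeb_tree_inf_proof R y : In (x, y) R -> inf_proof (loeb_tree R y).
Proof.
  intros Hxy. split.
  - apply loop_preproof. exists 0, R, y. auto with arith.
  - intros b Hb. exact (loop_branch_progress R y b Hxy Hb).
Qed.

End Loeb.

(* Löb's axiom: after implication-right and box-right at a fresh [y], the
   remaining sequent is the root of [loeb_tree]. *)
Lemma loeb_derivable x A : derivable (Seq [] [] [(x, Imp (loeb_hyp A) (Box A))]).
Proof.
  eapply by_rule1; [apply (r_impR [] [] []) |].
  set (y := fresh_label (Seq [] [(x, loeb_hyp A)] [(x, Box A)])).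
  eapply by_rule1; [apply (r_boxR [] [(x, loeb_hyp A)] [] x y A), fresh_label_fresh |].
  exists (loeb_tree x A [(x, y)] y). split; [reflexivity |].
  apply loeb_tree_inf_proof. left. reflexivity.
Qed.

(* The axioms K, 4 and the duality axioms have finite proofs: open the
   boxes/diamonds at a fresh world and finish propositionally or by identity. *)
Lemma K_derivable x A B : derivable (Seq [] [] [(x, Imp (Box (Imp A B)) (Imp (Box A) (Box B)))]).
Proof.
  eapply by_rule1; [apply (r_impR [] [] []) |].
  eapply by_rule1; [apply (r_impR [] _ []) |].
  set (y := fresh_label (Seq [] [(x, Box A); (x, Box (Imp A B))] [(x, Box B)])).
  eapply by_rule1; [apply (r_boxR [] _ [] x y B), fresh_label_fresh |].
  eapply by_rule1; [apply r_boxL; left; reflexivity |].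
  eapply derivable_perm; [apply perm_swap | apply Permutation_refl |].
  eapply by_rule1; [apply r_boxL; left; reflexivity |].
  apply (propositional_completeness _ y [Imp A B; A] [B]). truth_table.
Qed.

Lemma four_derivable x A : derivable (Seq [] [] [(x, Imp (Box A) (Box (Box A)))]).
Proof.
  eapply by_rule1; [apply (r_impR [] [] []) |].
  set (y := fresh_label (Seq [] [(x, Box A)] [(x, Box (Box A))])).
  eapply by_rule1; [apply (r_boxR [] _ [] x y (Box A)), fresh_label_fresh |].
  set (z := fresh_label (Seq [(x, y)] [(x, Box A)] [(y, Box A)])).
  eapply by_rule1; [apply (r_boxR [(x, y)] _ [] y z A), fresh_label_fresh |].
  eapply by_rule1; [apply (r_tr _ _ _ x y z); [right; left | left]; reflexivity |].
  eapply by_rule1; [apply r_boxL; left; reflexivity | apply identity].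
Qed.

Lemma dual1_derivable x A : derivable (Seq [] [] [(x, Imp (Dia A) (Neg (Box (Neg A))))]).
Proof.
  eapply by_rule1; [apply (r_impR [] [] []) |].
  eapply by_rule1; [apply (r_impR [] _ []) |].
  eapply derivable_perm; [apply perm_swap | apply Permutation_refl |].
  set (y := fresh_label (Seq [] [(x, Dia A); (x, Box (Neg A))] [(x, Bot)])).
  eapply by_rule1; [apply (r_diaL [] _ _ x y A), fresh_label_fresh |].
  eapply derivable_perm; [apply perm_swap | apply Permutation_refl |].
  eapply by_rule1; [apply r_boxL; left; reflexivity |].
  eapply by_rule1; [apply r_WR |].
  apply (propositional_completeness _ y [Neg A; A] []). truth_table.
Qed.

Lemma dual2_derivable x A : derivable (Seq [] [] [(x, Imp (Neg (Box (Neg A))) (Dia A))]).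
Proof.
  eapply by_rule1; [apply (r_impR [] [] []) |].
  eapply by_rule2; [apply (r_impL [] [] [] [(x, Dia A)] []) | | apply by_rule0, r_botL].
  set (y := fresh_label (Seq [] [] [(x, Box (Neg A)); (x, Dia A)])).
  eapply by_rule1; [apply (r_boxR [] [] _ x y (Neg A)), fresh_label_fresh |].
  eapply by_rule1; [apply r_impR |].
  eapply derivable_perm; [apply Permutation_refl | apply perm_swap |].
  eapply by_rule1; [apply r_diaR; left; reflexivity |].
  apply (shared_formula _ _ _ (y, A)); simpl; auto.
Qed.

Lemma tautology_derivable R x A : tautology A -> derivable (Seq R [] [(x, A)]).
Proof.
  intros Htaut. apply (propositional_completeness R x [] [A]).
  intros v _. simpl. rewrite (Htaut v). reflexivity.
Qed.

(* Modus ponens is a cut on [x:A → B] followed by implication-left. *)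
Lemma modus_ponens R x A B :
  derivable (Seq R [] [(x, Imp A B)]) -> derivable (Seq R [] [(x, A)]) ->
  derivable (Seq R [] [(x, B)]).
Proof.
  intros HAB HA.
  eapply by_rule2; [apply (r_cut R [] [] [] [(x, B)] x (Imp A B)) | exact HAB |].
  eapply by_rule2; [apply (r_impL R [] [] [] [(x, B)]) | exact HA | apply identity].
Qed.

(* Necessitation: box-right at a fresh world, then thinning away [x R y]. *)
Lemma necessitation x A :
  (forall y, derivable (Seq [] [] [(y, A)])) -> derivable (Seq [] [] [(x, Box A)]).
Proof.
  intros HA. set (y := fresh_label (Seq [] [] [(x, Box A)])).
  eapply by_rule1; [apply (r_boxR [] [] [] x y A), fresh_label_fresh |].
  apply (by_rule1 (Seq [] [] [(y, A)]) (Seq ([] ++ [(x, y)]) [] [(y, A)])); [apply r_thin | apply HA].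
Qed.

Lemma GL_derivable A : GL A -> forall x, derivable (Seq [] [] [(x, A)]).
Proof.
  induction 1; intro x.
  - apply tautology_derivable. assumption.
  - apply K_derivable.
  - apply four_derivable.
  - apply loeb_derivable.
  - apply dual1_derivable.
  - apply dual2_derivable.
  - eapply modus_ponens; eauto.
  - apply necessitation. assumption.
Qed.

Theorem mainTheorem13 : forall (A : form) (x : label),
  GL A ->
  exists t : ptree, root t = Seq [] [] [(x, A)] /\ inf_proof t.
Proof. intros A x HA. exact (GL_derivable A HA x). Qed.
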